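(* Let $M\in\mathbb N$ and let $X(M)$ be the subshift defined below. Let $G_1'$ be the graph with one vertex and $2M+1$ loops named $\lambda,\rho_1,\dots,\rho_M,\eta_1,\dots,\eta_M$, and $G_1''$ the graph with one vertex and $M+2$ loops named $\lambda,\xi,\rho_1,\dots,\rho_M$; let $X_{G_1'},X_{G_1''}$ be their edge shifts (so $\mathcal B_n(X_{G_1'})$, resp. $\mathcal B_n(X_{G_1''})$, is the set of all words of length $n$ over the corresponding loop names). Then for every $n\ge1$ there exist bijections $$\{x\in P_n(X(M)):\text{the multiplier of }x\text{ is positive, neutral, or }\lambda^k\text{ for some }k\ge1\}\longrightarrow\mathcal B_n(X_{G_1'})$$ and $$\{x\in P_n(X(M)):\text{the multiplier of }x\text{ is negative, neutral, or a non-identity element of the submonoid generated by }\rho_1,\dots,\rho_M\}\longrightarrow\mathcal B_n(X_{G_1''}).$$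
   Context: Let $\Sigma_1=\{\lambda,\xi,\rho_1,\dots,\rho_M,\eta_1,\dots,\eta_M\}$. $\mathcal M_1(M)$ is the monoid with zero generated by $\Sigma_1$ and an identity $\mathbf 1$, subject only to the relations $\lambda\rho_i=\mathbf 1$, $\lambda\eta_i=0$, $\xi\eta_i=\mathbf 1$, $\xi\rho_i=0$ ($1\le i\le M$), $\mathbf 1$ is the identity and $0$ is absorbing; no other relations. $\mathit{red}:\Sigma_1^*\to\mathcal M_1(M)$ sends a word to the product of its letters (empty word to $\mathbf 1$). $X(M)=\{x\in\Sigma_1^{\mathbb Z}:\mathit{red}(x_i\cdots x_j)\neq 0\ \forall i\le j\}$ with shift $\sigma$; $P_n(X(M))=\{x\in X(M):\sigma^nx=x\}$, and the periodic defining block of $x\in P_n(X(M))$ is $x_0\cdots x_{n-1}$. $\mathcal M_1^+$ is the submonoid generated by $\rho_i,\eta_i$ and $\mathcal M_1^-$ the submonoid generated by $\lambda,\xi$. Every block $\alpha$ can be written $\alpha=\alpha_+\alpha_-$ with $\mathit{red}(\alpha_+)\in\mathcal M_1^+$, $\mathit{red}(\alpha_-)\in\mathcal M_1^-$; the multiplier of $\alpha$ (and of $\alpha^\infty$) is $\mathit{red}(\alpha_-\alpha_+)$, called positive if in $\mathcal M_1^+\setminus\{\mathbf 1\}$, negative if in $\mathcal M_1^-\setminus\{\mathbf 1\}$, neutral if equal to $\mathbf 1$. *)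

From mathcomp Require Import all_boot all_algebra.
Set Implicit Arguments. Unset Strict Implicit. Unset Printing Implicit Defensive.
Import GRing.Theory Num.Theory.

Inductive letter (M : nat) : Type :=
  | Lam : letter M
  | Xi  : letter M
  | Rho : 'I_M -> letter M
  | Eta : 'I_M -> letter M.
Arguments Lam {M}. Arguments Xi {M}.

Definition is_pos M (a : letter M) : bool :=
  match a with Rho _ | Eta _ => true | _ => false end.
Definition is_neg M (a : letter M) : bool :=
  match a with Lam | Xi => true | _ => false end.
Definition is_rho M (a : letter M) : bool :=
  match a with Rho _ => true | _ => false end.

(* Elements of the monoid M_1(M), represented by normal forms:
   None = 0, Some w = the reduced word w (no negative letter immediately
   followed by a positive letter; equivalently w = (positive word)(negative word)). *)
Definition mon M := option (seq (letter M)).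

(* One reduction step, the stack being stored reversed (top = head). *)
Definition step M (a : letter M) (s : mon M) : mon M :=
  match s with
  | None => None
  | Some st =>
      match a, st with
      | Rho _, Lam :: st' => Some st'   (* lambda rho_i = 1 *)
      | Eta _, Xi :: st'  => Some st'   (* xi eta_i = 1 *)
      | Rho _, Xi :: _    => None       (* xi rho_i = 0 *)
      | Eta _, Lam :: _   => None       (* lambda eta_i = 0 *)
      | _, _ => Some (a :: st)
      end
  end.

Definition red M (w : seq (letter M)) : mon M :=
  omap (@rev _) (foldl (fun s a => step a s) (Some [::]) w).

Definition shift M (x : int -> letter M) : int -> letter M := fun i => x (i + 1)%R.

Definition block M (x : int -> letter M) (i : int) (len : nat) : seq (letter M) :=
  [seq x (i + k%:Z)%R | k <- iota 0 len].

Definition in_X M (x : int -> letter M) : Prop :=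
  forall (i : int) (len : nat), red (block x i len.+1) <> None.

Definition in_Pn M (n : nat) (x : int -> letter M) : Prop :=
  in_X x /\ iter n (@shift M) x = x.

Definition defblock M (n : nat) (x : int -> letter M) := block x 0 n.

Definition in_Mplus M (m : mon M) : Prop := exists s, m = Some s /\ all (@is_pos M) s.
Definition in_Mminus M (m : mon M) : Prop := exists s, m = Some s /\ all (@is_neg M) s.

Definition is_multiplier M (alpha : seq (letter M)) (m : mon M) : Prop :=
  exists ap am, alpha = ap ++ am /\ in_Mplus (red ap) /\ in_Mminus (red am)
                /\ m = red (am ++ ap).

Definition mult_positive M (m : mon M) : Prop := in_Mplus m /\ m <> Some [::].
Definition mult_negative M (m : mon M) : Prop := in_Mminus m /\ m <> Some [::].
Definition mult_neutral M (m : mon M) : Prop := m = Some [::].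
Definition mult_lambda_power M (m : mon M) : Prop :=
  exists k, (0 < k)%N /\ m = Some (nseq k Lam).
Definition mult_rho_nonid M (m : mon M) : Prop :=
  exists s, m = Some s /\ all (@is_rho M) s /\ s <> [::].

Inductive edge1' (M : nat) : Type :=
  | E1'Lam : edge1' M | E1'Rho : 'I_M -> edge1' M | E1'Eta : 'I_M -> edge1' M.
Inductive edge1'' (M : nat) : Type :=
  | E1''Lam : edge1'' M | E1''Xi : edge1'' M | E1''Rho : 'I_M -> edge1'' M.

(* B_n of the edge shift of a one-vertex graph = all words of length n over its loops *)
Definition Bn (E : Type) (n : nat) := n.-tuple E.

Definition Pn_set1 (M n : nat) :=
  {x : int -> letter M | in_Pn n x /\
     exists m, is_multiplier (defblock n x) m /\
       (mult_positive m \/ mult_neutral m \/ mult_lambda_power m)}.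
Definition Pn_set2 (M n : nat) :=
  {x : int -> letter M | in_Pn n x /\
     exists m, is_multiplier (defblock n x) m /\
       (mult_negative m \/ mult_neutral m \/ mult_rho_nonid m)}.

From mathcomp Require Import all_boot all_algebra zify.
From Stdlib Require Import ProofIrrelevance FunctionalExtensionality ClassicalEpsilon.
Set Implicit Arguments. Unset Strict Implicit. Unset Printing Implicit Defensive.
Import GRing.Theory.

(* A periodic point of period n is its defining block w, repeated, and it lies in X(M) iff
   every power of w reduces to a nonzero element.  Labelling letters by loops of the graph
   identifies xi with lambda (for G_1'), resp. eta_i with rho_i (for G_1''), and is a bijection
   on the blocks with the prescribed multiplier: in such a block a negative letter that is
   followed, cyclically, by a positive one must cancel with it, so each identified letter is
   recovered from its partner; cancelling the pair preserves both nonzero reduction and the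
   multiplier.  Induction on the length leaves blocks that are entirely negative or entirely
   positive, whose multiplier is the block itself, and the kind of multiplier allowed picks
   out exactly one preimage of each label word. *)

Section SeqCut.

Variable T : Type.
Implicit Types a s : seq T.

Lemma take_cat_size_add a s i : take (size a + i) (a ++ s) = a ++ take i s.
Proof. by rewrite take_cat ltnNge leq_addr addKn. Qed.

Lemma drop_cat_size_add a s i : drop (size a + i) (a ++ s) = drop i s.
Proof. by rewrite drop_cat ltnNge leq_addr addKn. Qed.

Lemma dropl_cat a s j : j <= size a -> drop j (a ++ s) = drop j a ++ s.
Proof.
rewrite drop_cat leq_eqVlt => /orP[/eqP->|->] //.
by rewrite ltnn subnn drop0 drop_size.
Qed.

Lemma cat_inj_size a1 b1 a2 b2 : size a1 = size a2 -> a1 ++ b1 = a2 ++ b2 -> a1 = a2 /\ b1 = b2.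
Proof. by elim: a1 a2 => [|l a1 IHa] [|l' a2] //= [/IHa IH] [-> /IH[-> ->]]. Qed.

Lemma map_eq_cat (S : Type) (f : T -> S) (w : seq T) (a b : seq S) : map f w = a ++ b ->
  exists a1 b1, [/\ w = a1 ++ b1, map f a1 = a & map f b1 = b].
Proof.
move=> e; exists (take (size a) w), (drop (size a) w).
by rewrite cat_take_drop map_take map_drop e take_size_cat // drop_size_cat.
Qed.

End SeqCut.

Section Words.

Variable M : nat.
Implicit Types (l c o : letter M) (s : mon M) (a b st u v w x y : seq (letter M)).

Definition run s w := foldl (fun s l => step l s) s w.

Arguments run : simpl never.

Lemma red_run w : red w = omap (@rev _) (run (Some [::]) w).
Proof. by []. Qed.

Lemma run_cat s x y : run s (x ++ y) = run (run s x) y.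
Proof. exact: foldl_cat. Qed.

Lemma run_None w : run None w = None.
Proof. by elim: w. Qed.

Lemma run_cons s l w : run s (l :: w) = run (step l s) w.
Proof. by []. Qed.

Lemma pos_neg l : is_pos l = ~~ is_neg l.
Proof. by case: l. Qed.

Lemma step_neg l st : is_neg l -> step l (Some st) = Some (l :: st).
Proof. by case: l => //; case: st => // -[]. Qed.

Lemma step_pos l st : is_pos l -> all (@is_pos M) st -> step l (Some st) = Some (l :: st).
Proof. by case: l => // i _; case: st => // -[]. Qed.

Lemma run_all_neg v st : all (@is_neg M) v -> run (Some st) v = Some (rev v ++ st).
Proof.
elim: v st => //= l v IHv st /andP[nl nv].
by rewrite run_cons step_neg // IHv // rev_cons cat_rcons.
Qed.

Lemma run_all_pos v st : all (@is_pos M) v -> all (@is_pos M) st ->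
  run (Some st) v = Some (rev v ++ st).
Proof.
elim: v st => //= l v IHv st /andP[pl pv] pst.
by rewrite run_cons step_pos // IHv /= ?pl // rev_cons cat_rcons.
Qed.

Lemma red_all_neg v : all (@is_neg M) v -> red v = Some v.
Proof. by move=> nv; rewrite red_run run_all_neg //= cats0 revK. Qed.

Lemma red_all_pos v : all (@is_pos M) v -> red v = Some v.
Proof. by move=> pv; rewrite red_run run_all_pos //= cats0 revK. Qed.

(* A positive letter at the bottom of the stack is never touched again. *)
Lemma run_rcons_pos c st v : is_pos c ->
  run (Some (rcons st c)) v = omap (rcons^~ c) (run (Some st) v).
Proof.
move=> pc; have step_rcons l st' :
    step l (Some (rcons st' c)) = omap (rcons^~ c) (step l (Some st')).
  by case: c pc => // j _; case: st' => [|[] t]; case: l.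
elim: v st => //= l v IHv st; rewrite !run_cons step_rcons.
by case: (step l (Some st)) => [st'|] /=; rewrite ?IHv ?run_None.
Qed.

Lemma red_cons_pos c v : is_pos c -> red (c :: v) = omap (cons c) (red v).
Proof.
move=> pc; rewrite !red_run run_cons.
have -> : step c (Some [::]) = Some (rcons [::] c) by case: c pc.
by rewrite run_rcons_pos //; case: (run _ v) => //= st; rewrite rev_rcons.
Qed.

Lemma red_rcons_neg o v : is_neg o -> red (rcons v o) = omap (rcons^~ o) (red v).
Proof.
move=> no; rewrite !red_run -cats1 run_cat.
by case: (run _ v) => //= st; rewrite run_cons step_neg //= rev_cons.
Qed.

Lemma run_neg_top v N P T : all (@is_neg M) N -> all (@is_pos M) P ->
  run (Some (N ++ T)) v <> None -> run (Some (N ++ P)) v <> None.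
Proof.
elim: v N P T => //= l v IHv N P T nN pP; rewrite !run_cons.
case nl: (is_neg l).
  by rewrite !step_neg //; apply: (IHv (l :: N)) => //=; rewrite nl.
case: N nN => [_|o N]; rewrite ?cat0s.
  have pl : is_pos l by rewrite pos_neg nl.
  rewrite [step l (Some P)]step_pos //.
  case: (step l (Some T)) => [T'|]; last by rewrite run_None.
  by apply: (IHv [::]) => //=; rewrite pl.
case/andP; case: o => // _ nN; case: l nl => // i _; rewrite ?run_None //; exact: IHv.
Qed.

Lemma red_catl x y : red (x ++ y) <> None -> red x <> None.
Proof. by rewrite !red_run run_cat; case: (run _ x); rewrite ?run_None. Qed.

Lemma red_catr x y : red (x ++ y) <> None -> red y <> None.
Proof.
rewrite !red_run run_cat; case: (run _ x) => [st|]; rewrite ?run_None // => nz.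
have : run (Some st) y <> None by case: (run _ y) nz.
by move/(@run_neg_top y [::] [::] st isT isT); case: (run _ y).
Qed.

Definition matching o c : bool :=
  match o, c with Lam, Rho _ | Xi, Eta _ => true | _, _ => false end.

Lemma matching_neg o c : matching o c -> is_neg o.
Proof. by case: o; case: c. Qed.

Lemma matching_pos o c : matching o c -> is_pos c.
Proof. by case: o; case: c. Qed.

Definition same_run x y := forall s, run s x = run s y.

Lemma same_run_sym x y : same_run x y -> same_run y x.
Proof. by move=> e s. Qed.

Lemma same_run_cat x y x' y' : same_run x y -> same_run x' y' -> same_run (x ++ x') (y ++ y').
Proof. by move=> e e' s; rewrite !run_cat e e'. Qed.

Lemma same_run_red x y : same_run x y -> red x = red y.
Proof. by move=> e; rewrite !red_run e. Qed.

Lemma same_run_pair o c a b : matching o c -> same_run (a ++ o :: c :: b) (a ++ b).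
Proof.
move=> oc; apply: same_run_cat => // s; rewrite (run_cat s [:: o; c]).
by case: o c oc s => [] [] // i _ [[|[] st]|].
Qed.

Lemma red_mismatch o c a b : is_neg o -> is_pos c -> ~~ matching o c ->
  red (a ++ o :: c :: b) = None.
Proof.
move=> no pc oc; rewrite red_run run_cat (run_cat _ [:: o; c]).
case: (run _ a) => [st|]; rewrite ?run_None //.
rewrite !run_cons step_neg //.
by case: o no oc => //; case: c pc => // *; rewrite run_None.
Qed.

Definition wpow w k := iter k (cat w) [::].

Lemma wpowS w k : wpow w k.+1 = w ++ wpow w k.
Proof. by []. Qed.

Lemma same_run_wpow x y k : same_run x y -> same_run (wpow x k) (wpow y k).
Proof. by move=> e; elim: k => //= k; apply: same_run_cat. Qed.

Lemma all_wpow (p : pred (letter M)) w k : all p w -> all p (wpow w k).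
Proof. by move=> pw; elim: k => //= k; rewrite all_cat pw. Qed.

Definition nonzero_powers w := forall k, red (wpow w k) <> None.

Lemma nonzero_powers_same_run x y : same_run x y -> nonzero_powers x -> nonzero_powers y.
Proof. by move=> e nx k; rewrite -(same_run_red (same_run_wpow k e)). Qed.

Lemma nonzero_powers_pair o c a b : matching o c ->
  nonzero_powers (a ++ o :: c :: b) <-> nonzero_powers (a ++ b).
Proof.
by move=> oc; split; apply: nonzero_powers_same_run; last apply: same_run_sym;
  exact: same_run_pair.
Qed.

Lemma wpow_wrap c x o k : matching o c ->
  same_run (wpow (c :: rcons x o) k.+1) (c :: rcons (wpow x k.+1) o).
Proof.
move=> oc; elim: k => [|k IHk] s; first by rewrite /wpow /= !cats0.
rewrite wpowS run_cat IHk -run_cat.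
have -> : (c :: rcons x o) ++ c :: rcons (wpow x k.+1) o =
          (c :: x) ++ o :: c :: rcons (wpow x k.+1) o by rewrite /= cat_rcons.
by rewrite (same_run_pair (c :: x) _ oc) /= !rcons_cat.
Qed.

Lemma nonzero_powers_wrap c x o : matching o c ->
  nonzero_powers (c :: rcons x o) <-> nonzero_powers x.
Proof.
move=> oc; have [no pc] := (matching_neg oc, matching_pos oc).
have redE k : red (wpow (c :: rcons x o) k.+1) =
              omap (cons c) (omap (rcons^~ o) (red (wpow x k.+1))).
  by rewrite (same_run_red (wpow_wrap x k oc)) red_cons_pos // red_rcons_neg.
by split=> nz [|k] //; move: (nz k.+1); rewrite redE; case: (red _).
Qed.

Lemma red_matching o c a b : red (a ++ o :: c :: b) <> None ->
  is_neg o -> is_pos c -> matching o c.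
Proof. by move=> nz no pc; apply: contraT => oc; rewrite red_mismatch in nz. Qed.

Lemma nonzero_powers_matching o c a b : nonzero_powers (a ++ o :: c :: b) ->
  is_neg o -> is_pos c -> matching o c.
Proof. by move=> nz; apply: (@red_matching _ _ a b); have := nz 1%N; rewrite /wpow /= cats0. Qed.

Lemma nonzero_powers_wrap_matching c x o : nonzero_powers (c :: rcons x o) ->
  is_pos c -> is_neg o -> matching o c.
Proof.
move=> nz pc no; apply: (@red_matching _ _ (c :: x) (rcons x o)) => //.
by have := nz 2; rewrite /wpow /= cats0 cat_rcons.
Qed.

Lemma all_neg_pos u : all (@is_neg M) u -> all (@is_pos M) u -> u = [::].
Proof. by case: u => //= l u /andP[nl _] /andP[]; rewrite pos_neg nl. Qed.

Lemma Mplus_cons c m : is_pos c -> in_Mplus (omap (cons c) m) <-> in_Mplus m.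
Proof.
move=> pc; case: m => [u|] /=; last by split=> -[? []].
split=> -[v [[<-]]]; first by rewrite /= pc => pu; exists u.
by move=> pu; exists (c :: u); rewrite /= pc.
Qed.

Lemma Mminus_rcons o m : is_neg o -> in_Mminus (omap (rcons^~ o) m) <-> in_Mminus m.
Proof.
move=> no; case: m => [u|] /=; last by split=> -[? []].
split=> -[v [[<-]]]; first by rewrite all_rcons no => nu; exists u.
by move=> nu; exists (rcons u o); rewrite all_rcons no.
Qed.

Lemma Mminus_cons_pos c m : is_pos c -> ~ in_Mminus (omap (cons c) m).
Proof. by rewrite pos_neg => nc [v []]; case: m => //= u [<-] /=; rewrite (negbTE nc). Qed.

Lemma Mplus_rcons_neg o m : is_neg o -> ~ in_Mplus (omap (rcons^~ o) m).
Proof. by move=> no [v []]; case: m => //= u [<-]; rewrite all_rcons pos_neg no. Qed.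

Section Multipliers.

Variable cls : mon M -> Prop.

Definition mult_at w j := [/\ in_Mplus (red (take j w)), in_Mminus (red (drop j w))
                            & cls (red (rot j w))].

Definition has_mult w := exists j, mult_at w j.

Definition admissible w := nonzero_powers w /\ has_mult w.

Lemma has_multP w : (exists m, is_multiplier w m /\ cls m) <-> has_mult w.
Proof.
split=> [[_ [[p [q [-> [pp [nq ->]]]]] cm]]|[j [pj nj cj]]].
  by exists (size p); rewrite /mult_at take_size_cat // drop_size_cat // rot_size_cat.
by exists (red (rot j w)); split=> //; exists (take j w), (drop j w); rewrite cat_take_drop.
Qed.

Definition same_cut x i y j :=
  [/\ same_run (take i x) (take j y), same_run (drop i x) (drop j y)
    & same_run (rot i x) (rot j y)].

Lemma mult_at_same_cut x i y j : same_cut x i y j -> mult_at x i <-> mult_at y j.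
Proof. by rewrite /mult_at; case=> /same_run_red-> /same_run_red-> /same_run_red->. Qed.

Lemma same_cut_pair_low o c a b j : matching o c -> j <= size a ->
  same_cut (a ++ o :: c :: b) j (a ++ b) j.
Proof.
move=> oc ja; rewrite /same_cut /rot !takel_cat // !dropl_cat //.
by split=> //; rewrite -?catA; apply: same_run_pair.
Qed.

Lemma same_cut_pair_high o c a b i : matching o c ->
  same_cut (a ++ o :: c :: b) (size a + i.+2) (a ++ b) (size a + i).
Proof.
move=> oc; rewrite /same_cut /rot !take_cat_size_add !drop_cat_size_add /=.
by split=> //; rewrite ?catA; apply: same_run_pair.
Qed.

Lemma has_mult_pair o c a b : matching o c ->
  has_mult (a ++ o :: c :: b) <-> has_mult (a ++ b).
Proof.
move=> oc; have no := matching_neg oc.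
split=> -[j mj]; have [ja|aj] := leqP j (size a).
- by exists j; apply/(mult_at_same_cut (same_cut_pair_low b oc ja)).
- move: mj; rewrite -(subnKC aj) addSnnS; case: (j - _) => [|i] mj.
    by case: mj; rewrite take_cat_size_add /= cats1 red_rcons_neg // => /(Mplus_rcons_neg no)[].
  by exists (size a + i); apply/(mult_at_same_cut (same_cut_pair_high a b i oc)).
- by exists j; apply/(mult_at_same_cut (same_cut_pair_low b oc ja)).
- exists (size a + (j - size a).+2); apply/(mult_at_same_cut (same_cut_pair_high a b _ oc)).
  by rewrite subnKC // ltnW.
Qed.

Lemma mult_at_wrap c x o i : matching o c -> i <= size x ->
  mult_at (c :: rcons x o) i.+1 <-> mult_at x i.
Proof.
move=> oc ix; have [no pc] := (matching_neg oc, matching_pos oc).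
have rotE : red (rot i.+1 (c :: rcons x o)) = red (rot i x).
  rewrite /rot /= -cats1 takel_cat // dropl_cat // -catA.
  exact: same_run_red (same_run_pair _ _ oc).
rewrite /mult_at rotE /= -cats1 takel_cat // dropl_cat // cats1 red_cons_pos // red_rcons_neg //.
by split=> -[pj nj cj]; split=> //; by [apply/(Mplus_cons _ pc) | apply/(Mminus_rcons _ no)].
Qed.

Lemma has_mult_wrap c x o : matching o c -> has_mult (c :: rcons x o) <-> has_mult x.
Proof.
move=> oc; have [no pc] := (matching_neg oc, matching_pos oc).
split=> -[j mj].
- case: j mj => [|i] mj.
    by case: mj => _; rewrite drop0 red_cons_pos // => /(Mminus_cons_pos pc)[].
  have [ix|xi] := leqP i (size x); first by exists i; apply/(mult_at_wrap oc ix).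
  case: mj; rewrite take_oversize /= ?size_rcons // -(rcons_cons c x o) red_rcons_neg //.
  by move=> /(Mplus_rcons_neg no)[].
- have [jx|xj] := leqP j (size x); first by exists j.+1; apply/(mult_at_wrap oc jx).
  exists (size x).+1; apply/(mult_at_wrap oc (leqnn _)); have xj' := ltnW xj.
  move: mj; rewrite /mult_at take_oversize // drop_oversize // rot_oversize //.
  by rewrite take_size drop_size rot_size.
Qed.

Lemma admissible_pair o c a b : matching o c ->
  admissible (a ++ o :: c :: b) <-> admissible (a ++ b).
Proof.
by move=> oc; rewrite /admissible; split=> -[nz hm];
  split; apply/(nonzero_powers_pair _ _ oc) + apply/(has_mult_pair _ _ oc).
Qed.

Lemma admissible_wrap c x o : matching o c -> admissible (c :: rcons x o) <-> admissible x.
Proof.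
by move=> oc; rewrite /admissible; split=> -[nz hm];
  split; apply/(nonzero_powers_wrap _ oc) + apply/(has_mult_wrap _ oc).
Qed.

Definition one_signed w := all (@is_neg M) w || all (@is_pos M) w.

Lemma admissible_one_signed w : one_signed w -> admissible w <-> cls (Some w).
Proof.
have all_cut (p : pred (letter M)) j : all p w -> all p (take j w) && all p (drop j w).
  by rewrite -all_cat cat_take_drop.
case/orP=> [nw|pw]; split.
- case=> _ [j [pj _ cj]]; have /andP[nt nd] := all_cut _ j nw.
  move: pj; rewrite red_all_neg // => -[_ [[<-] pt]].
  have tj := all_neg_pos nt pt; have dj : drop j w = w by rewrite -[RHS](cat_take_drop j) tj.
  by move: cj; rewrite /rot tj dj cats0 red_all_neg.
- move=> cw; split; first by move=> k; rewrite red_all_neg // all_wpow.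
  exists 0; rewrite /mult_at take0 drop0 rot0 (red_all_neg nw).
  by split=> //; [exists [::] | exists w].
- case=> _ [j [_ nj cj]]; have /andP[pt pd] := all_cut _ j pw.
  move: nj; rewrite red_all_pos // => -[_ [[<-] nd]].
  have dj := all_neg_pos nd pd; have tj : take j w = w by rewrite -[RHS](cat_take_drop j) dj cats0.
  by move: cj; rewrite /rot tj dj red_all_pos.
- move=> cw; split; first by move=> k; rewrite red_all_pos // all_wpow.
  exists (size w); rewrite /mult_at take_size drop_size rot_size (red_all_pos pw).
  by split=> //; [exists w | exists [::]].
Qed.

End Multipliers.

Variant word_shape : seq (letter M) -> Prop :=
  | ShapePair a o c b of is_neg o & is_pos c : word_shape (a ++ o :: c :: b)
  | ShapeWrap c x o of is_pos c & is_neg o : word_shape (c :: rcons x o)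
  | ShapeOneSigned w of one_signed w : word_shape w.

Lemma word_shapeP w : word_shape w.
Proof.
elim: w => [|l w [a o c b no pc|c x o pc no|{}w sw]]; first exact: ShapeOneSigned.
- exact: (@ShapePair (l :: a) o c b no pc).
- case nl: (is_neg l); first exact: (@ShapePair [::] l c _ nl pc).
  by rewrite -rcons_cons; apply: ShapeWrap; rewrite ?pos_neg ?nl.
- case nl: (is_neg l); case/orP: sw => sw.
  + by apply: ShapeOneSigned; rewrite /one_signed /= nl sw.
  + case: w sw => [_|c w]; first by apply: ShapeOneSigned; rewrite /one_signed /= nl.
    by case/andP=> pc _; exact: (@ShapePair [::] l c _ nl pc).
  + case/lastP: w sw => [_|x o].
      by apply: ShapeOneSigned; rewrite /one_signed /= pos_neg nl orbT.
    by rewrite all_rcons => /andP[no _]; apply: ShapeWrap; rewrite ?pos_neg ?nl.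
  + by apply: ShapeOneSigned; rewrite /one_signed /= pos_neg nl sw orbT.
Qed.

End Words.

Section Periodic.

Variable M : nat.
Implicit Types (x : int -> letter M) (w : seq (letter M)).

Lemma iter_shift x k i : iter k (@shift M) x i = x (i + k%:Z)%R.
Proof. by elim: k i => [|k IHk] i /=; rewrite ?addr0 // /shift IHk -addrA -intS. Qed.

Definition periodic n x := forall i, x (i + n%:Z)%R = x i.

Lemma iter_shift_periodic n x : iter n (@shift M) x = x <-> periodic n x.
Proof.
split=> [e i|px]; first by rewrite -iter_shift e.
by apply: functional_extensionality => i; rewrite iter_shift px.
Qed.

Lemma periodic_mulz n x (q : int) i : periodic n x -> x (i + q * n%:Z)%R = x i.
Proof.
move=> px; have xmuln k j : x (j + (k * n)%N%:Z)%R = x j.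
  by elim: k j => [|k IHk] j; rewrite ?addr0 // mulSn PoszD [(n%:Z + _)%R]addrC addrA px IHk.
case: q => k; first by rewrite -PoszM xmuln.
by rewrite -(xmuln k.+1 (i + Negz k * n%:Z)%R) NegzE PoszM mulNr addrNK.
Qed.

Lemma periodic_eqmodz n x i j : periodic n x -> (i = j %[mod n])%Z -> x i = x j.
Proof.
move=> px eij; rewrite [i](divz_eq _ n) [j](divz_eq _ n) eij.
by rewrite !(addrC _ (_ %% _)%Z) !periodic_mulz.
Qed.

Lemma size_block x i L : size (block x i L) = L.
Proof. by rewrite size_map size_iota. Qed.

Lemma nth_block x L k : (k < L)%N -> nth Lam (block x 0 L) k = x k.
Proof. by move=> kL; rewrite (nth_map 0%N) ?size_iota // nth_iota // add0r. Qed.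

Lemma block_add x i a b : block x i (a + b) = block x i a ++ block x (i + a%:Z)%R b.
Proof.
rewrite /block iotaD map_cat add0n -[in iota a b](addn0 a) iotaDl -map_comp.
by congr (_ ++ _); apply: eq_map => k /=; rewrite PoszD addrA.
Qed.

Lemma block_eqmodz n x i j L : periodic n x -> (i = j %[mod n])%Z -> block x i L = block x j L.
Proof.
move=> px eij; apply: eq_map => k; apply: (periodic_eqmodz px).
by rewrite -modzDml eij modzDml.
Qed.

Lemma block_wpow n x k : periodic n x -> block x 0 (k * n) = wpow (block x 0 n) k.
Proof.
move=> px; elim: k => // k IHk; rewrite mulSn block_add add0r wpowS -IHk.
by congr (_ ++ _); apply: block_eqmodz; rewrite // modzz mod0z.
Qed.

Lemma in_X_nonzero_powers n x : (0 < n)%N -> periodic n x ->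
  in_X x <-> nonzero_powers (block x 0 n).
Proof.
move=> n_gt0 px; split=> [xX [|k] //|nz i L].
  have kn : (0 < k.+1 * n)%N by rewrite muln_gt0 n_gt0.
  by rewrite -block_wpow // -(prednK kn); apply: xX.
have [r er] : exists r : nat, (i %% n)%Z = r.
  by exists `|(i %% n)%Z|%N; rewrite gez0_abs // modz_ge0 // eqz_nat -lt0n.
rewrite (@block_eqmodz n x i r) //; last by rewrite -er modz_mod.
have := nz (r + L.+1)%N; rewrite -block_wpow // -(subnKC (leq_pmulr (r + L.+1) n_gt0)).
by rewrite !block_add add0r => /red_catl/red_catr.
Qed.

Definition periodize w (i : int) := nth Lam w `|(i %% size w)%Z|%N.

Lemma periodize_periodic w : periodic (size w) (periodize w).
Proof. by move=> i; rewrite /periodize modzDr. Qed.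

Lemma block_periodize w : block (periodize w) 0 (size w) = w.
Proof.
apply: (@eq_from_nth _ Lam); rewrite size_block // => k kw.
by rewrite nth_block // /periodize modz_small // ltz_nat kw.
Qed.

Lemma periodize_block n x : (0 < n)%N -> periodic n x -> periodize (block x 0 n) = x.
Proof.
move=> n_gt0 px; apply: functional_extensionality => i.
have n0 : (n%:Z != 0)%R by rewrite eqz_nat -lt0n.
rewrite /periodize size_block nth_block; last by rewrite -ltz_nat gez0_abs ?modz_ge0 ?ltz_pmod.
by apply: (periodic_eqmodz px); rewrite gez0_abs ?modz_ge0 // modz_mod.
Qed.

Lemma admissible_block (cls : mon M -> Prop) n x : (0 < n)%N -> periodic n x ->
  (in_X x /\ exists m, is_multiplier (defblock n x) m /\ cls m) <-> admissible cls (block x 0 n).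
Proof.
move=> n_gt0 px; rewrite /admissible -has_multP.
by split=> -[? ?]; split=> //; apply/(in_X_nonzero_powers n_gt0 px).
Qed.

Lemma mktuple_block (E : Type) (f : letter M -> E) x n :
  val [tuple f (x i) | i < n] = map f (block x 0 n).
Proof. by rewrite /= /block -val_enum_ord -!map_comp. Qed.

End Periodic.

Lemma inj_surj_bijective (A B : Type) (f : A -> B) :
  injective f -> (forall b, exists a, f a = b) -> bijective f.
Proof.
move=> f_inj f_surj; pose g b := proj1_sig (constructive_indefinite_description _ (f_surj b)).
have fgK : cancel g f by move=> b; rewrite /g; case: constructive_indefinite_description.
by exists g => // a; apply: f_inj; rewrite fgK.
Qed.

(* [enc] labels letters by loops; it may identify two letters of the same sign, which a
   matching partner tells apart again.  [dec] picks representatives, and the one-signed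
   words allowed by [cls] are exactly the words of representatives. *)
Section Lifting.

Variables (M : nat) (E : Type) (enc : letter M -> E) (dec : E -> letter M) (cls : mon M -> Prop).

Hypothesis encK : cancel dec enc.
Hypothesis enc_sign : forall l l', enc l = enc l' -> is_neg l = is_neg l'.
Hypothesis matching_lift : forall o c, is_neg o -> is_pos c ->
  exists o' c', [/\ enc o' = enc o, enc c' = enc c & matching o' c'].
Hypothesis matching_enc_inj : forall o c o' c', matching o c -> matching o' c' ->
  enc o = enc o' -> enc c = enc c' -> o = o' /\ c = c'.
Hypothesis cls_dec : forall t, one_signed (map dec t) -> cls (Some (map dec t)).
Hypothesis cls_canonical : forall w, cls (Some w) -> map dec (map enc w) = w.

Lemma one_signed_enc w w' : map enc w = map enc w' -> one_signed w = one_signed w'.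
Proof.
move=> e; rewrite /one_signed.
suff [-> ->] : all (@is_neg M) w = all (@is_neg M) w' /\ all (@is_pos M) w = all (@is_pos M) w'.
  by [].
by elim: w w' e => [|l w IHw] [|l' w'] //= [/enc_sign el /IHw[-> ->]]; rewrite !pos_neg el.
Qed.

Lemma lift_exists u : exists2 w, admissible cls w & map enc w = map enc u.
Proof.
have [n] := ubnP (size u); elim: n u => // n IHn u.
case: (word_shapeP u) => [a o c b no pc|c x o pc no|w sw] /ltnSE su.
- have [|w aw] := IHn (a ++ b); first by move: su; rewrite !size_cat /=; lia.
  rewrite map_cat => /map_eq_cat[a1 [b1 [ew ea eb]]]; subst w.
  have [o' [c' [eo ec oc]]] := matching_lift no pc.
  exists (a1 ++ o' :: c' :: b1); first exact/(admissible_pair _ _ _ oc).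
  by rewrite !map_cat /= ea eb eo ec.
- have [|w aw ew] := IHn x; first by move: su; rewrite /= size_rcons; lia.
  have [o' [c' [eo ec oc]]] := matching_lift no pc.
  exists (c' :: rcons w o'); first exact/(admissible_wrap _ _ oc).
  by rewrite /= !map_rcons ew eo ec.
- have encdecK : map enc (map dec (map enc w)) = map enc w by rewrite mapK.
  have sw' : one_signed (map dec (map enc w)) by rewrite (one_signed_enc encdecK).
  by exists (map dec (map enc w)) => //; apply/admissible_one_signed => //; apply: cls_dec.
Qed.

Lemma map_enc_inj w1 w2 : admissible cls w1 -> admissible cls w2 ->
  map enc w1 = map enc w2 -> w1 = w2.
Proof.
have [n] := ubnP (size w1); elim: n w1 w2 => // n IHn w1 w2.
case: (word_shapeP w1) => [a1 o1 c1 b1 no pc|c1 x1 o1 pc no|w sw] /ltnSE su a1w a2w.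
- rewrite map_cat /= => /esym/map_eq_cat[a2 [r [e2 ea]]]; subst w2.
  case: r a2w => [|o2 [|c2 b2]] // a2w [eo ec eb].
  have no2 : is_neg o2 by rewrite (enc_sign eo).
  have pc2 : is_pos c2 by rewrite pos_neg (enc_sign ec) -pos_neg.
  have oc1 := nonzero_powers_matching a1w.1 no pc.
  have oc2 := nonzero_powers_matching a2w.1 no2 pc2.
  have [<- <-] := matching_enc_inj oc1 oc2 (esym eo) (esym ec).
  have e12 : a1 ++ b1 = a2 ++ b2.
    apply: IHn; first by move: su; rewrite !size_cat /=; lia.
    + exact/(admissible_pair _ _ _ oc1).
    + exact/(admissible_pair _ _ _ oc2).
    + by rewrite !map_cat ea eb.
  have sa : size a1 = size a2 by rewrite -(size_map enc a1) -(size_map enc a2) ea.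
  by have [-> ->] := cat_inj_size sa e12.
- rewrite /= map_rcons; case: w2 a2w => [|c2 r] // a2w [ec].
  case/lastP: r a2w => [|x2 o2] a2w; first by case: (map enc x1).
  rewrite map_rcons => /rcons_inj[ex eo].
  have no2 : is_neg o2 by rewrite -(enc_sign eo).
  have pc2 : is_pos c2 by rewrite pos_neg -(enc_sign ec) -pos_neg.
  have oc1 := nonzero_powers_wrap_matching a1w.1 pc no.
  have oc2 := nonzero_powers_wrap_matching a2w.1 pc2 no2.
  have [<- <-] := matching_enc_inj oc1 oc2 eo ec.
  congr (_ :: rcons _ _); apply: IHn => //; first by move: su; rewrite /= size_rcons; lia.
  + exact/(admissible_wrap _ _ oc1).
  + exact/(admissible_wrap _ _ oc2).
- move=> e; have sw2 : one_signed w2 by rewrite -(one_signed_enc e).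
  rewrite -(cls_canonical (proj1 (admissible_one_signed _ sw) a1w)) e.
  exact: cls_canonical (proj1 (admissible_one_signed _ sw2) a2w).
Qed.

Lemma Pn_bijection n : (0 < n)%N ->
  exists f : {x : int -> letter M | in_Pn n x /\ exists m, is_multiplier (defblock n x) m /\ cls m}
               -> n.-tuple E, bijective f.
Proof.
move=> n_gt0; exists (fun x => [tuple enc (sval x (Posz i)) | i < n]); apply: inj_surj_bijective.
  move=> x1 x2 /(congr1 val); rewrite !mktuple_block => e12.
  apply: eq_sig_hprop => [x ? ?|]; first exact: proof_irrelevance.
  case: x1 x2 e12 => [x1 [[X1 P1] m1]] [x2 [[X2 P2] m2]] /=.
  move: P1 P2 => /iter_shift_periodic p1 /iter_shift_periodic p2 e12.
  rewrite -(periodize_block n_gt0 p1) -(periodize_block n_gt0 p2); congr periodize.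
  apply: (map_enc_inj _ _ e12).
    by apply/(admissible_block _ n_gt0 p1); split.
  by apply/(admissible_block _ n_gt0 p2); split.
move=> t; have [w aw] := lift_exists (map dec t); rewrite (mapK encK) => ew.
have sw : size w = n by rewrite -(size_map enc) ew size_tuple.
have pw : periodic n (periodize w) by rewrite -sw; exact: periodize_periodic.
have bw : block (periodize w) 0 n = w by rewrite -sw block_periodize.
have [xX xm] : in_X (periodize w) /\ exists m, is_multiplier (defblock n (periodize w)) m /\ cls m.
  by apply/(admissible_block _ n_gt0 pw); rewrite bw.
exists (exist _ (periodize w) (conj (conj xX (proj2 (iter_shift_periodic _ _) pw)) xm)).
by apply: val_inj; rewrite mktuple_block bw.
Qed.

End Lifting.

Section Instances.

Variable M : nat.

Definition enc1 (l : letter M) : edge1' M :=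
  match l with Lam | Xi => E1'Lam M | Rho i => E1'Rho i | Eta i => E1'Eta i end.
Definition dec1 (e : edge1' M) : letter M :=
  match e with E1'Lam => Lam | E1'Rho i => Rho i | E1'Eta i => Eta i end.
Definition cls1 (m : mon M) := mult_positive m \/ mult_neutral m \/ mult_lambda_power m.

Lemma enc1K : cancel dec1 enc1. Proof. by case. Qed.

Lemma enc1_sign l l' : enc1 l = enc1 l' -> is_neg l = is_neg l'.
Proof. by case: l => [||i|i]; case: l'. Qed.

Lemma matching_lift1 o c : is_neg o -> is_pos c ->
  exists o' c', [/\ enc1 o' = enc1 o, enc1 c' = enc1 c & matching o' c'].
Proof. by case: c => // i no _; [exists Lam, (Rho i) | exists Xi, (Eta i)]; case: o no. Qed.

Lemma matching_enc1_inj o c o' c' : matching o c -> matching o' c' ->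
  enc1 o = enc1 o' -> enc1 c = enc1 c' -> o = o' /\ c = c'.
Proof. by case: o c o' c' => [||?|?] [||?|?] [||?|?] [||?|?] //= _ _ _ [->]. Qed.

Lemma cls1_dec t : one_signed (map dec1 t) -> cls1 (Some (map dec1 t)).
Proof.
case: t => [|e t]; first by right; left.
case/orP=> [nt|pt]; last by left; split=> //; exists (map dec1 (e :: t)).
right; right; exists (size (e :: t)); split=> //; congr Some.
by elim: (e :: t) nt => //= -[|i|i] s IHs //= /IHs ->.
Qed.

Lemma cls1_canonical w : cls1 (Some w) -> map dec1 (map enc1 w) = w.
Proof.
case=> [[[_ [[<-] pw]] _]|[[->] //|[k [_ [->]]]]]; last by elim: k => //= k ->.
by elim: w pw => //= -[||i|i] w IHw //= /IHw ->.
Qed.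

Definition enc2 (l : letter M) : edge1'' M :=
  match l with Lam => E1''Lam M | Xi => E1''Xi M | Rho i | Eta i => E1''Rho i end.
Definition dec2 (e : edge1'' M) : letter M :=
  match e with E1''Lam => Lam | E1''Xi => Xi | E1''Rho i => Rho i end.
Definition cls2 (m : mon M) := mult_negative m \/ mult_neutral m \/ mult_rho_nonid m.

Lemma enc2K : cancel dec2 enc2. Proof. by case. Qed.

Lemma enc2_sign l l' : enc2 l = enc2 l' -> is_neg l = is_neg l'.
Proof. by case: l => [||i|i]; case: l'. Qed.

Lemma matching_lift2 o c : is_neg o -> is_pos c ->
  exists o' c', [/\ enc2 o' = enc2 o, enc2 c' = enc2 c & matching o' c'].
Proof.
move=> no; case: c => // i _.
all: by case: o no => // _; [exists Lam, (Rho i) | exists Xi, (Eta i)].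
Qed.

Lemma matching_enc2_inj o c o' c' : matching o c -> matching o' c' ->
  enc2 o = enc2 o' -> enc2 c = enc2 c' -> o = o' /\ c = c'.
Proof. by case: o c o' c' => [||?|?] [||?|?] [||?|?] [||?|?] //= _ _ _ [->]. Qed.

Lemma cls2_dec t : one_signed (map dec2 t) -> cls2 (Some (map dec2 t)).
Proof.
case: t => [|e t]; first by right; left.
case/orP=> [nt|pt]; first by left; split=> //; exists (map dec2 (e :: t)).
right; right; exists (map dec2 (e :: t)); split=> //; split=> //.
by elim: (e :: t) pt => //= -[||i] s IHs //= /IHs ->.
Qed.

Lemma cls2_canonical w : cls2 (Some w) -> map dec2 (map enc2 w) = w.
Proof.
case=> [[[_ [[<-] nw]] _]|[[->] //|[_ [[<-] [rw _]]]]].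
  by elim: w nw => //= -[||i|i] w IHw //= /IHw ->.
by elim: w rw => //= -[||i|i] w IHw //= /IHw ->.
Qed.

End Instances.

Theorem lemma3p1 (M n : nat) : (1 <= n)%N ->
  (exists f : Pn_set1 M n -> Bn (edge1' M) n, bijective f) /\
  (exists g : Pn_set2 M n -> Bn (edge1'' M) n, bijective g).
Proof.
move=> n_gt0; split.
  exact: (Pn_bijection (@enc1K M) (@enc1_sign M) (@matching_lift1 M) (@matching_enc1_inj M)
                       (@cls1_dec M) (@cls1_canonical M) n_gt0).
exact: (Pn_bijection (@enc2K M) (@enc2_sign M) (@matching_lift2 M) (@matching_enc2_inj M)
                     (@cls2_dec M) (@cls2_canonical M) n_gt0).
Qed.
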